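(* Let $(H,\mu_H,\Delta_H,\alpha_H)$ be a Hom-bialgebra and $(A,\mu_A,\alpha_A)$ a left $H$-module Hom-algebra with action $h\otimes a\mapsto h\cdot a$, and assume $\alpha_H$ and $\alpha_A$ are bijective. Define $R:H\otimes A\to A\otimes H$ by $R(h\otimes a)=\alpha_H^{-2}(h_1)\cdot\alpha_A^{-1}(a)\otimes\alpha_H^{-1}(h_2)$. Then $R$ is a Hom-twisting map between $A$ and $H$. Consequently $A\# H:=A\otimes_R H$ is a Hom-associative algebra with structure map $\alpha_A\otimes\alpha_H$ and multiplication $(a\# h)(a'\# h')=a(\alpha_H^{-2}(h_1)\cdot\alpha_A^{-1}(a'))\#\alpha_H^{-1}(h_2)h'$.
   Context: Algebras/coalgebras over a field $k$, not assumed (co)unital; $\Delta(h)=h_1\otimes h_2$ (Sweedler notation). A Hom-associative algebra is $(A,\mu,\alpha)$ with $\alpha(aa')=\alpha(a)\alpha(a')$, $\alpha(a)(a'a'')=(aa')\alpha(a'')$. A Hom-bialgebra is $(H,\mu,\Delta,\alpha)$ with $(H,\mu,\alpha)$ Hom-associative and $\Delta:H\to H\otimes H$ linear such that $\Delta(h_1)\otimes\alpha(h_2)=\alpha(h_1)\otimes\Delta(h_2)$, $\Delta(hh')=h_1h'_1\otimes h_2h'_2$, $\Delta(\alpha(h))=\alpha(h_1)\otimes\alpha(h_2)$. A left $H$-module Hom-algebra is a Hom-associative algebra $(A,\mu_A,\alpha_A)$ with a linear map $H\otimes A\to A$, $h\otimes a\mapsto h\cdot a$, such that $\alpha_A(h\cdot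 a)=\alpha_H(h)\cdot\alpha_A(a)$, $\alpha_H(h)\cdot(h'\cdot a)=(hh')\cdot\alpha_A(a)$, and $\alpha_H^2(h)\cdot(aa')=(h_1\cdot a)(h_2\cdot a')$. For Hom-associative algebras $(A,\mu_A,\alpha_A),(B,\mu_B,\alpha_B)$, a Hom-twisting map is a linear $R:B\otimes A\to A\otimes B$ with $(\alpha_A\otimes\alpha_B)\circ R=R\circ(\alpha_B\otimes\alpha_A)$, $R\circ(\alpha_B\otimes\mu_A)=(\mu_A\otimes\alpha_B)\circ(\mathrm{id}_A\otimes R)\circ(R\otimes\mathrm{id}_A)$, $R\circ(\mu_B\otimes\alpha_A)=(\alpha_A\otimes\mu_B)\circ(R\otimes\mathrm{id}_B)\circ(\mathrm{id}_B\otimes R)$; $A\otimes_RB$ is $A\otimes B$ with product $(\mu_A\otimes\mu_B)\circ(\mathrm{id}_A\otimes R\otimes\mathrm{id}_B)$ and structure map $\alpha_A\otimes\alpha_B$ (a Hom-associative algebra). $a\# h$ denotes $a\otimes h$. *)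

(* Since no (infinite-dimensional) tensor product is available, elements of
   V (x) W are represented by formal finite sums of simple tensors
   (seq (V * W)), and equality in V (x) W is equality under every bilinear
   map (universal property of the tensor product); likewise for triple
   tensors with trilinear maps. *)
From HB Require Import structures.
From mathcomp Require Import all_boot all_algebra.
Set Implicit Arguments. Unset Strict Implicit. Unset Printing Implicit Defensive.
Import GRing.Theory.
Local Open Scope ring_scope.

Section Defs.
Variable k : fieldType.

Definition lin (V W : lmodType k) (f : V -> W) :=
  forall (c : k) x y, f (c *: x + y) = c *: f x + f y.

Definition bilin (V W U : lmodType k) (f : V -> W -> U) :=
  (forall (c : k) x x' y, f (c *: x + x') y = c *: f x y + f x' y) /\
  (forall (c : k) x y y', f x (c *: y + y') = c *: f x y + f x y').

Definition trilin (V W X U : lmodType k) (f : V -> W -> X -> U) :=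
  (forall (c : k) x x' y z, f (c *: x + x') y z = c *: f x y z + f x' y z) /\
  (forall (c : k) x y y' z, f x (c *: y + y') z = c *: f x y z + f x y' z) /\
  (forall (c : k) x y z z', f x y (c *: z + z') = c *: f x y z + f x y z').

Definition teq2 (V W : lmodType k) (s t : seq (V * W)) :=
  forall (U : lmodType k) (f : V -> W -> U), bilin f ->
    \sum_(p <- s) f p.1 p.2 = \sum_(p <- t) f p.1 p.2.

Definition teq3 (V W X : lmodType k) (s t : seq (V * W * X)) :=
  forall (U : lmodType k) (f : V -> W -> X -> U), trilin f ->
    \sum_(p <- s) f p.1.1 p.1.2 p.2 = \sum_(p <- t) f p.1.1 p.1.2 p.2.

Definition tscale (V W : lmodType k) (c : k) (s : seq (V * W)) : seq (V * W) :=
  [seq (c *: p.1, p.2) | p <- s].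

Definition tmap (V W V' W' : lmodType k) (f : V -> V') (g : W -> W')
  (s : seq (V * W)) : seq (V' * W') := [seq (f p.1, g p.2) | p <- s].

Definition is_hom_assoc (A : lmodType k) (mu : A -> A -> A) (al : A -> A) :=
  [/\ bilin mu, lin al,
      (forall x y, al (mu x y) = mu (al x) (al y)) &
      (forall x y z, mu (al x) (mu y z) = mu (mu x y) (al z))].

(* Hom-bialgebra (H, mu, Delta, alpha); Delta h = sum of h_1 (x) h_2 *)
Definition is_hom_bialgebra (H : lmodType k) (mu : H -> H -> H) (al : H -> H)
  (D : H -> seq (H * H)) :=
  [/\ is_hom_assoc mu al,
      (forall (c : k) x y, teq2 (D (c *: x + y)) (tscale c (D x) ++ D y)),
      (* Delta(h_1) (x) alpha(h_2) = alpha(h_1) (x) Delta(h_2) *)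
      (forall h, teq3 (flatten [seq [seq (q.1, q.2, al p.2) | q <- D p.1] | p <- D h])
                      (flatten [seq [seq (al p.1, q.1, q.2) | q <- D p.2] | p <- D h])),
      (* Delta(h h') = h_1 h'_1 (x) h_2 h'_2 *)
      (forall h h', teq2 (D (mu h h'))
          (flatten [seq [seq (mu p.1 q.1, mu p.2 q.2) | q <- D h'] | p <- D h])) &
      (forall h, teq2 (D (al h)) (tmap al al (D h)))].

Definition is_module_hom_algebra (H A : lmodType k) (muH : H -> H -> H) (alH : H -> H)
  (D : H -> seq (H * H)) (muA : A -> A -> A) (alA : A -> A) (act : H -> A -> A) :=
  [/\ is_hom_assoc muA alA, bilin act,
      (forall h a, alA (act h a) = act (alH h) (alA a)),
      (forall h h' a, act (alH h) (act h' a) = act (muH h h') (alA a)) &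
      (forall h a a', act (alH (alH h)) (muA a a') =
                      \sum_(p <- D h) muA (act p.1 a) (act p.2 a'))].

Definition is_hom_twisting (A B : lmodType k) (muA : A -> A -> A) (alA : A -> A)
  (muB : B -> B -> B) (alB : B -> B) (R : B -> A -> seq (A * B)) :=
  [/\ (* R is (well defined and) linear on B (x) A *)
      (forall (c : k) b b' a, teq2 (R (c *: b + b') a) (tscale c (R b a) ++ R b' a)),
      (forall (c : k) b a a', teq2 (R b (c *: a + a')) (tscale c (R b a) ++ R b a')),
      (forall b a, teq2 (tmap alA alB (R b a)) (R (alB b) (alA a))),
      (* R o (alB (x) muA) = (muA (x) alB) o (id (x) R) o (R (x) id) *)
      (forall b a a', teq2 (R (alB b) (muA a a'))
          (flatten [seq [seq (muA p.1 q.1, alB q.2) | q <- R p.2 a'] | p <- R b a])) &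
      (* R o (muB (x) alA) = (alA (x) muB) o (R (x) id) o (id (x) R) *)
      (forall b b' a, teq2 (R (muB b b') (alA a))
          (flatten [seq [seq (alA q.1, muB q.2 p.2) | q <- R b p.1] | p <- R b' a]))].

(* the product of A (x)_R B : (mu_A (x) mu_B) o (id (x) R (x) id), on formal sums *)
Definition tw_mul (A B : lmodType k) (R : B -> A -> seq (A * B))
  (muA : A -> A -> A) (muB : B -> B -> B) (s t : seq (A * B)) : seq (A * B) :=
  flatten [seq flatten [seq [seq (muA p.1 r.1, muB r.2 q.2) | r <- R p.2 q.1]
                       | q <- t] | p <- s].

Definition is_hom_assoc_tensor (V W : lmodType k)
  (mu : seq (V * W) -> seq (V * W) -> seq (V * W)) (al : seq (V * W) -> seq (V * W)) :=
  [/\ (forall s s' t t', teq2 s s' -> teq2 t t' -> teq2 (mu s t) (mu s' t')),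
      (forall s s', teq2 s s' -> teq2 (al s) (al s')),
      (forall s t, teq2 (al (mu s t)) (mu (al s) (al t))) &
      (forall s t u, teq2 (mu (al s) (mu t u)) (mu (mu s t) (al u)))].

Definition smash_R (H A : lmodType k) (D : H -> seq (H * H)) (act : H -> A -> A)
  (invH : H -> H) (invA : A -> A) (h : H) (a : A) : seq (A * H) :=
  [seq (act (invH (invH p.1)) (invA a), invH p.2) | p <- D h].

End Defs.

(* The map R is assembled from Delta, the action and the inverses of the structure
   maps, and each Hom-twisting identity reduces to one axiom once the inverses are
   cancelled: compatibility with the structure maps to Delta(alpha h) = alpha(h_1) (x)
   alpha(h_2) and alpha_A(h.a) = alpha_H(h).alpha_A(a); compatibility with mu_A to the
   module-algebra axiom alpha_H^2(h).(aa') = (h_1.a)(h_2.a') followed by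
   Hom-coassociativity of Delta; compatibility with mu_H to multiplicativity of Delta
   and the Hom-module axiom. Independently of the smash product, A (x)_R B is
   Hom-associative for every Hom-twisting map R between Hom-associative algebras:
   multiplicativity of alpha_A (x) alpha_B is the alpha-compatibility of R, and
   Hom-associativity is the two multiplicative twisting identities applied on either
   side of the middle factor. Since tensors are formal sums compared through all
   bilinear maps, every step is an identity between finite sums, and well-definedness
   of the product on tensors comes from linearity of R in each argument. *)

From mathcomp Require Import all_boot all_algebra.
Set Implicit Arguments. Unset Strict Implicit. Unset Printing Implicit Defensive.
Import GRing.Theory.
Local Open Scope ring_scope.

Section MultilinearMaps.
Variable k : fieldType.
Implicit Types V W X Y Z U : lmodType k.

Lemma lin0 V W (g : V -> W) : lin g -> g 0 = 0.
Proof.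
move=> g_lin; have := g_lin 1 0 0; rewrite !scale1r addr0 => g0.
by apply: (@addrI _ (g 0)); rewrite addr0 -g0.
Qed.

Lemma linD V W (g : V -> W) : lin g -> forall x y, g (x + y) = g x + g y.
Proof. by move=> g_lin x y; have := g_lin 1 x y; rewrite !scale1r. Qed.

Lemma linZ V W (g : V -> W) : lin g -> forall c x, g (c *: x) = c *: g x.
Proof. by move=> g_lin c x; have := g_lin c x 0; rewrite (lin0 g_lin) !addr0. Qed.

Lemma lin_sum V W (g : V -> W) I (r : seq I) (F : I -> V) :
  lin g -> g (\sum_(i <- r) F i) = \sum_(i <- r) g (F i).
Proof.
move=> g_lin; elim: r => [|i r IHr]; first by rewrite !big_nil (lin0 g_lin).
by rewrite !big_cons (linD g_lin) IHr.
Qed.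

Lemma lin_id V : lin (@id V). Proof. by []. Qed.

Lemma lin_can V W (f : V -> W) (g : W -> V) :
  lin f -> cancel f g -> cancel g f -> lin g.
Proof. by move=> f_lin fK gK c x y; apply: (can_inj fK); rewrite f_lin !gK. Qed.

Lemma bilin_linl V W U (f : V -> W -> U) y : bilin f -> lin (f^~ y).
Proof. by case=> f_linl _ c x x'; apply: f_linl. Qed.

Lemma bilin_linr V W U (f : V -> W -> U) x : bilin f -> lin (f x).
Proof. by case=> _ f_linr c y y'; apply: f_linr. Qed.

Lemma bilinZl V W U (f : V -> W -> U) :
  bilin f -> forall c x y, f (c *: x) y = c *: f x y.
Proof. by move=> f_bilin c x y; apply: (linZ (bilin_linl y f_bilin)). Qed.

Lemma bilin_suml V W U (f : V -> W -> U) I (r : seq I) (F : I -> V) y :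
  bilin f -> f (\sum_(i <- r) F i) y = \sum_(i <- r) f (F i) y.
Proof. by move=> f_bilin; apply: (lin_sum _ _ (bilin_linl y f_bilin)). Qed.

Lemma bilin_comp V W V' W' U (f : V' -> W' -> U) (g : V -> V') (h : W -> W') :
  bilin f -> lin g -> lin h -> bilin (fun x y => f (g x) (h y)).
Proof.
by case=> f_linl f_linr g_lin h_lin; split=> c x x' y;
  rewrite ?g_lin ?h_lin ?f_linl ?f_linr.
Qed.

Lemma trilin_comp V W X V' W' U (f : V' -> W' -> U) (g : V -> W -> V') (h : X -> W') :
  bilin f -> bilin g -> lin h -> trilin (fun x y z => f (g x y) (h z)).
Proof.
case=> f_linl f_linr [g_linl g_linr] h_lin.
by split; [|split] => c x x' y z;
  rewrite ?g_linl ?g_linr ?h_lin ?f_linl ?f_linr.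
Qed.

Lemma teq2_tmap V W V' W' (f : V -> V') (g : W -> W') s s' :
  lin f -> lin g -> teq2 s s' -> teq2 (tmap f g s) (tmap f g s').
Proof.
move=> f_lin g_lin eq_s U F F_bilin; rewrite !big_map.
exact: (eq_s U (fun x y => F (f x) (g y)) (bilin_comp F_bilin f_lin g_lin)).
Qed.

Definition tlinear V X Y (T : V -> seq (X * Y)) :=
  forall c x y, teq2 (T (c *: x + y)) (tscale c (T x) ++ T y).

Lemma lin_sum_tlinear V X Y U (T : V -> seq (X * Y)) (F : X -> Y -> U) :
  tlinear T -> bilin F -> lin (fun x => \sum_(p <- T x) F p.1 p.2).
Proof.
move=> T_lin F_bilin c x y /=.
rewrite (T_lin c x y _ F F_bilin) big_cat big_map scaler_sumr; congr (_ + _).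
by apply: eq_bigr => p _; exact: (linZ (bilin_linl p.2 F_bilin)).
Qed.

Section SumTlinear.
Variables (V X Y Z U : lmodType k) (T : V -> seq (X * Y)) (F : Z -> X -> Y -> U).
Hypotheses (T_lin : tlinear T) (F_bilinr : forall z, bilin (F z))
  (F_linl : forall u v, lin (fun z => F z u v)).

Lemma bilin_sum_tlinearl : bilin (fun x z => \sum_(q <- T x) F z q.1 q.2).
Proof.
split=> c x x' y; first exact: lin_sum_tlinear.
by rewrite scaler_sumr -big_split; apply: eq_bigr => q _; apply: F_linl.
Qed.

Lemma bilin_sum_tlinearr : bilin (fun z x => \sum_(q <- T x) F z q.1 q.2).
Proof.
split=> c x x' y; last exact: lin_sum_tlinear.
by rewrite scaler_sumr -big_split; apply: eq_bigr => q _; apply: F_linl.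
Qed.

End SumTlinear.

Lemma big_flatten_map (T1 T2 T3 : Type) (M : nmodType) (s : seq T1)
    (g : T1 -> seq T2) (h : T1 -> T2 -> T3) (F : T3 -> M) :
  \sum_(x <- flatten [seq [seq h p q | q <- g p] | p <- s]) F x =
  \sum_(p <- s) \sum_(q <- g p) F (h p q).
Proof. by rewrite big_flatten big_map; apply: eq_bigr => p _; rewrite big_map. Qed.

End MultilinearMaps.

Section TwistedTensorProduct.
Variables (k : fieldType) (A B : lmodType k) (muA : A -> A -> A) (alA : A -> A)
  (muB : B -> B -> B) (alB : B -> B) (R : B -> A -> seq (A * B)).
Hypotheses (muA_bilin : bilin muA) (alA_lin : lin alA)
  (alA_muA : forall x y, alA (muA x y) = muA (alA x) (alA y))
  (muA_hassoc : forall x y z, muA (alA x) (muA y z) = muA (muA x y) (alA z))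
  (muB_bilin : bilin muB) (alB_lin : lin alB)
  (alB_muB : forall x y, alB (muB x y) = muB (alB x) (alB y))
  (muB_hassoc : forall x y z, muB (alB x) (muB y z) = muB (muB x y) (alB z)).
Hypotheses
  (R_linl : forall c b b' a, teq2 (R (c *: b + b') a) (tscale c (R b a) ++ R b' a))
  (R_linr : forall c b a a', teq2 (R b (c *: a + a')) (tscale c (R b a) ++ R b a'))
  (R_alpha : forall b a, teq2 (tmap alA alB (R b a)) (R (alB b) (alA a)))
  (R_muA : forall b a a', teq2 (R (alB b) (muA a a'))
      (flatten [seq [seq (muA p.1 q.1, alB q.2) | q <- R p.2 a'] | p <- R b a]))
  (R_muB : forall b b' a, teq2 (R (muB b b') (alA a))
      (flatten [seq [seq (alA q.1, muB q.2 p.2) | q <- R b p.1] | p <- R b' a])).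

Local Notation mul := (tw_mul R muA muB).
Local Notation alpha := (tmap alA alB).

Lemma big_tw_mul (M : nmodType) (F : A * B -> M) s t :
  \sum_(x <- mul s t) F x =
  \sum_(p <- s) \sum_(q <- t) \sum_(r <- R p.2 q.1) F (muA p.1 r.1, muB r.2 q.2).
Proof. by rewrite big_flatten big_map; apply: eq_bigr => p _; rewrite big_flatten_map. Qed.

Lemma bilin_mul_frame (U : lmodType k) (f : A -> B -> U) x y :
  bilin f -> bilin (fun u v => f (muA x u) (muB v y)).
Proof.
by move=> f_bilin; apply: bilin_comp f_bilin (bilin_linr x muA_bilin) (bilin_linl y muB_bilin).
Qed.

Lemma tw_mul_teq2 s s' t t' : teq2 s s' -> teq2 t t' -> teq2 (mul s t) (mul s' t').
Proof.
move=> eq_s eq_t U f f_bilin; rewrite !big_tw_mul.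
transitivity (\sum_(p <- s') \sum_(q <- t)
    \sum_(r <- R p.2 q.1) f (muA p.1 r.1) (muB r.2 q.2)).
  rewrite exchange_big [RHS]exchange_big; apply: eq_bigr => q _.
  apply: (eq_s U (fun x y => \sum_(r <- R y q.1) f (muA x r.1) (muB r.2 q.2))).
  apply: (bilin_sum_tlinearr (T := R^~ q.1) (F := fun x u v => f (muA x u) (muB v q.2))).
  - by move=> c x y; apply: R_linl.
  - by move=> x; apply: bilin_mul_frame.
  - move=> u v.
    exact: bilin_linl v (bilin_comp f_bilin (bilin_linl u muA_bilin) (bilin_linl q.2 muB_bilin)).
apply: eq_bigr => p _.
apply: (eq_t U (fun x y => \sum_(r <- R p.2 x) f (muA p.1 r.1) (muB r.2 y))).
apply: (bilin_sum_tlinearl (T := R p.2) (F := fun y u v => f (muA p.1 u) (muB v y))).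
- by move=> c x y; apply: R_linr.
- by move=> y; apply: bilin_mul_frame.
- move=> u v.
  exact: bilin_linr u (bilin_comp f_bilin (bilin_linr p.1 muA_bilin) (bilin_linr v muB_bilin)).
Qed.

Lemma tmap_tw_mul s t : teq2 (alpha (mul s t)) (mul (alpha s) (alpha t)).
Proof.
move=> U f f_bilin; rewrite big_map !big_tw_mul big_map; apply: eq_bigr => p _.
rewrite big_map; apply: eq_bigr => q _ /=.
rewrite -(R_alpha p.2 q.1 (bilin_mul_frame (alA p.1) (alB q.2) f_bilin)) big_map.
by apply: eq_bigr => r _; rewrite alA_muA alB_muB.
Qed.

Lemma tw_mul_hassoc s t u : teq2 (mul (alpha s) (mul t u)) (mul (mul s t) (alpha u)).
Proof.
move=> U f f_bilin; rewrite !big_tw_mul big_map; apply: eq_bigr => p _ /=.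
rewrite big_tw_mul; apply: eq_bigr => q _; rewrite [RHS]exchange_big [RHS]big_map.
apply: eq_bigr => w _ /=.
transitivity (\sum_(z <- R q.2 w.1) \sum_(x <- R p.2 q.1) \sum_(y <- R x.2 z.1)
    f (muA (muA p.1 x.1) (alA y.1)) (muB (muB y.2 z.2) (alB w.2))).
  apply: eq_bigr => z _.
  rewrite (R_muA p.2 q.1 z.1 (bilin_mul_frame (alA p.1) (muB z.2 w.2) f_bilin)).
  rewrite big_flatten_map; apply: eq_bigr => x _; apply: eq_bigr => y _ /=.
  by rewrite muA_hassoc muB_hassoc.
rewrite exchange_big; apply: eq_bigr => x _.
rewrite (R_muB x.2 q.2 w.1 (bilin_mul_frame (muA p.1 x.1) (alB w.2) f_bilin)).
by rewrite big_flatten_map.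
Qed.

Lemma tw_mul_hom_assoc_tensor : is_hom_assoc_tensor mul alpha.
Proof.
split; [exact: tw_mul_teq2 | | exact: tmap_tw_mul | exact: tw_mul_hassoc].
by move=> s s'; apply: teq2_tmap.
Qed.

End TwistedTensorProduct.

Section SmashProduct.
Variables (k : fieldType) (H A : lmodType k)
  (muH : H -> H -> H) (alH : H -> H) (D : H -> seq (H * H))
  (muA : A -> A -> A) (alA : A -> A) (act : H -> A -> A)
  (invH : H -> H) (invA : A -> A).
Hypotheses (alH_lin : lin alH)
  (alH_muH : forall x y, alH (muH x y) = muH (alH x) (alH y))
  (D_lin : tlinear D)
  (D_coassoc : forall h,
     teq3 (flatten [seq [seq (q.1, q.2, alH p.2) | q <- D p.1] | p <- D h])
          (flatten [seq [seq (alH p.1, q.1, q.2) | q <- D p.2] | p <- D h]))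
  (D_muH : forall h h', teq2 (D (muH h h'))
     (flatten [seq [seq (muH p.1 q.1, muH p.2 q.2) | q <- D h'] | p <- D h]))
  (D_alH : forall h, teq2 (D (alH h)) (tmap alH alH (D h))).
Hypotheses (muA_bilin : bilin muA) (alA_lin : lin alA)
  (alA_muA : forall x y, alA (muA x y) = muA (alA x) (alA y))
  (act_bilin : bilin act)
  (alA_act : forall h a, alA (act h a) = act (alH h) (alA a))
  (act_muH : forall h h' a, act (alH h) (act h' a) = act (muH h h') (alA a))
  (act_muA : forall h a a', act (alH (alH h)) (muA a a') =
                            \sum_(p <- D h) muA (act p.1 a) (act p.2 a')).
Hypotheses (alHK : cancel alH invH) (invHK : cancel invH alH)
  (alAK : cancel alA invA) (invAK : cancel invA alA).

Local Notation R := (smash_R D act invH invA).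

Lemma invH_lin : lin invH. Proof. exact: lin_can alHK invHK. Qed.
Lemma invA_lin : lin invA. Proof. exact: lin_can alAK invAK. Qed.

Lemma invH_muH x y : invH (muH x y) = muH (invH x) (invH y).
Proof. by apply: (can_inj alHK); rewrite alH_muH !invHK. Qed.

Lemma invA_muA x y : invA (muA x y) = muA (invA x) (invA y).
Proof. by apply: (can_inj alAK); rewrite alA_muA !invAK. Qed.

Lemma act_invH2_lin a : lin (fun h => act (invH (invH h)) a).
Proof. by move=> c x y; rewrite !invH_lin (proj1 act_bilin). Qed.

Lemma sum_D_invH (U : lmodType k) (F : H -> H -> U) x : bilin F ->
  \sum_(p <- D (invH x)) F p.1 p.2 = \sum_(p <- D x) F (invH p.1) (invH p.2).
Proof.
move=> F_bilin; rewrite -{2}[x]invHK.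
rewrite (D_alH _ (bilin_comp F_bilin invH_lin invH_lin)) big_map.
by apply: eq_bigr => p _; rewrite !alHK.
Qed.

(* The module-algebra axiom read at [h = alH (alH (invH (invH h)))]. *)
Lemma act_muA_expand h a a' : act h (muA a a') =
  \sum_(p <- D h) muA (act (invH (invH p.1)) a) (act (invH (invH p.2)) a').
Proof.
have m_bilin : bilin (fun u v => muA (act u a) (act v a')).
  exact: bilin_comp muA_bilin (bilin_linl a act_bilin) (bilin_linl a' act_bilin).
rewrite -{1}[h]invHK -{1}[invH h]invHK act_muA (sum_D_invH _ m_bilin).
by rewrite (sum_D_invH _ (bilin_comp m_bilin invH_lin invH_lin)).
Qed.

Lemma smash_R_linl c b b' a : teq2 (R (c *: b + b') a) (tscale c (R b a) ++ R b' a).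
Proof.
move=> U f f_bilin; rewrite big_cat !big_map.
rewrite (D_lin _ _ _ (bilin_comp f_bilin (act_invH2_lin (invA a)) invH_lin)).
rewrite !big_cat !big_map; congr (_ + _); apply: eq_bigr => p _ /=.
by rewrite !(linZ invH_lin) (bilinZl act_bilin).
Qed.

Lemma smash_R_linr c b a a' : teq2 (R b (c *: a + a')) (tscale c (R b a) ++ R b a').
Proof.
move=> U f f_bilin; rewrite big_cat !big_map /= -big_split; apply: eq_bigr => p _ /=.
by rewrite invA_lin (proj2 act_bilin) (proj1 f_bilin) (bilinZl f_bilin).
Qed.

Lemma smash_R_alpha b a : teq2 (tmap alA alH (R b a)) (R (alH b) (alA a)).
Proof.
move=> U f f_bilin; rewrite !big_map.
rewrite (D_alH _ (bilin_comp f_bilin (act_invH2_lin (invA (alA a))) invH_lin)).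
by rewrite big_map; apply: eq_bigr => p _ /=; rewrite alA_act !invHK !alHK alAK invAK.
Qed.

Lemma smash_R_muA b a a' : teq2 (R (alH b) (muA a a'))
  (flatten [seq [seq (muA p.1 q.1, alH q.2) | q <- R p.2 a'] | p <- R b a]).
Proof.
(* Both sides become sums over the two bracketings of the iterated coproduct of [b],
   which Hom-coassociativity identifies. *)
move=> U f f_bilin.
pose m u v := muA (act (invH (invH u)) (invA a)) (act (invH (invH v)) (invA a')).
have m_bilin : bilin m := bilin_comp muA_bilin (act_invH2_lin _) (act_invH2_lin _).
have act_invH_expand h : act (invH h) (muA (invA a) (invA a')) =
    \sum_(q <- D h) m (invH q.1) (invH q.2).
  by rewrite act_muA_expand (sum_D_invH _ m_bilin).
pose G x y z := f (m (invH x) (invH y)) (invH z).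
have G_trilin : trilin G := trilin_comp f_bilin (bilin_comp m_bilin invH_lin invH_lin) invH_lin.
have := D_coassoc b G_trilin; rewrite !big_flatten_map /= => G_coassoc.
transitivity (\sum_(p <- D b) \sum_(q <- D p.1) G q.1 q.2 (alH p.2)).
  rewrite big_map (D_alH _ (bilin_comp f_bilin (act_invH2_lin _) invH_lin)) big_map.
  apply: eq_bigr => p _ /=; rewrite !alHK invA_muA act_invH_expand bilin_suml //.
  by apply: eq_bigr => q _; rewrite /G alHK.
rewrite G_coassoc big_map; apply: eq_bigr => p _; rewrite big_map /=.
transitivity (\sum_(q <- D (invH p.2)) f (m p.1 q.1) q.2).
  rewrite (sum_D_invH _ (bilin_comp f_bilin (bilin_linr p.1 m_bilin) (@lin_id _ _))).
  by apply: eq_bigr => q _; rewrite /G alHK.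
by apply: eq_bigr => q _; rewrite invHK.
Qed.

Lemma smash_R_muH b b' a : teq2 (R (muH b b') (alA a))
  (flatten [seq [seq (alA q.1, muH q.2 p.2) | q <- R b p.1] | p <- R b' a]).
Proof.
move=> U f f_bilin.
rewrite big_map (D_muH _ _ (bilin_comp f_bilin (act_invH2_lin _) invH_lin)).
rewrite !big_flatten_map big_map exchange_big; apply: eq_bigr => p _ /=; rewrite big_map.
by apply: eq_bigr => q _ /=; rewrite alA_act invAK act_muH invAK !invH_muH alAK.
Qed.

Lemma smash_R_hom_twisting : is_hom_twisting muA alA muH alH R.
Proof.
split; [exact: smash_R_linl | exact: smash_R_linr | exact: smash_R_alpha |
        exact: smash_R_muA | exact: smash_R_muH].
Qed.

End SmashProduct.

Theorem theorem3p1 (k : fieldType) (H A : lmodType k)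
  (muH : H -> H -> H) (alH : H -> H) (D : H -> seq (H * H))
  (muA : A -> A -> A) (alA : A -> A) (act : H -> A -> A)
  (invH : H -> H) (invA : A -> A) :
  is_hom_bialgebra muH alH D ->
  is_module_hom_algebra muH alH D muA alA act ->
  cancel alH invH -> cancel invH alH ->
  cancel alA invA -> cancel invA alA ->
  is_hom_twisting muA alA muH alH (smash_R D act invH invA) /\
  is_hom_assoc_tensor (tw_mul (smash_R D act invH invA) muA muH) (tmap alA alH).
Proof.
move=> [[muH_bilin alH_lin alH_muH muH_hassoc] D_lin D_coassoc D_muH D_alH]
  [[muA_bilin alA_lin alA_muA muA_hassoc] act_bilin alA_act act_muH act_muA].
move=> alHK invHK alAK invAK.
have R_twisting : is_hom_twisting muA alA muH alH (smash_R D act invH invA).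
  exact: smash_R_hom_twisting.
split=> //; case: R_twisting => R_linl R_linr R_alpha R_muA R_muB.
exact: tw_mul_hom_assoc_tensor.
Qed.
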